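(* For every $\varepsilon>0$ there exists a unit-cost $k$-of-$n$ instance $I$ of Stochastic Score Classification (i.e., $B=2$, $c_j=1$ for all $j$, and $p_j\in(0,1)$ for all $j$) such that $$\mathbb{E}[\mathrm{cost}(\overline{\mathrm{OPT}},I)]\ge\left(\tfrac32-\varepsilon\right)\cdot\mathbb{E}[\mathrm{cost}(\mathrm{OPT},I)],$$ where $\overline{\mathrm{OPT}}$ is an optimal non-adaptive strategy and $\mathrm{OPT}$ an optimal adaptive strategy for $I$.
   Context: An instance $I$ of Stochastic Score Classification (SSC) consists of tests $N=\{1,\dots,n\}$, costs $c_j\ge 0$, success probabilities $p_j\in(0,1)$, and integers $0=t_1<t_2<\dots<t_B<t_{B+1}=n+1$. The outcome vector $x\in\{0,1\}^N$ has independent coordinates with $\Pr[x_j=1]=p_j$. The score $f(x)$ is the unique $i$ with $t_i\le\|x\|_1\le t_{i+1}-1$. A $k$-of-$n$ instance is one with $B=2$ and $t_2=k$. A (possibly adaptive) strategy conducts tests one at a time, each at most once, the choice of the next test possibly depending on outcomes observed so far, and stops as soon as $f(x)$ is determined (all $x'$ agreeing with $x$ on the conducted tests have $f(x')=f(x)$). A non-adaptive strategy is a fixed permutation of $N$: tests are conducted in this order until $f(x)$ is determined. $\mathrm{cost}(S,I)$ is the random total cost of tests conducted by $S$. $\mathrm{OPT}$ (resp. $\overline{\mathrm{OPT}}$) minimizes $\mathbb{E}[\mathrm{cost}(S,I)]$ over all adaptive (resp. non-adaptive) strategies. *)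

From mathcomp Require Import all_boot all_order all_algebra.
From mathcomp Require Import fingroup perm.
From mathcomp Require Import reals.
Set Implicit Arguments. Unset Strict Implicit. Unset Printing Implicit Defensive.
Import Order.TTheory GRing.Theory Num.Theory.
Local Open Scope ring_scope.

(* An adaptive strategy over tests 'I_n: a decision tree. [Test j t0 t1]
   conducts test j, continuing with t0 if x_j = 0 and t1 if x_j = 1. *)
Inductive dtree (n : nat) : Type :=
  | Stop : dtree n
  | Test : 'I_n -> dtree n -> dtree n -> dtree n.

Section SSC.
Variable R : realType.
Variable n : nat.
(* An SSC instance: costs c, success probabilities p, and the inner thresholds
   ts = [:: t_2; ...; t_B] (t_1 = 0 and t_{B+1} = n+1 implicit). *)
Variables (c : 'I_n -> R) (p : 'I_n -> R) (ts : seq nat).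

(* f(x) = the unique i with t_i <= |x|_1 <= t_{i+1} - 1 (for sorted ts). *)
Definition score (x : {ffun 'I_n -> bool}) : nat :=
  (1 + count (fun t => t <= #|[set j | x j]|) ts)%N.

Definition determined (S : {set 'I_n}) (x : {ffun 'I_n -> bool}) : bool :=
  [forall y : {ffun 'I_n -> bool},
     [forall j in S, y j == x j] ==> (score y == score x)].

Definition prob (x : {ffun 'I_n -> bool}) : R :=
  \prod_j (if x j then p j else 1 - p j).

(* Running a decision tree on x, having already conducted the tests in S:
   stop as soon as f(x) is determined; None signals an invalid run
   (stopping while undetermined, or repeating a test). *)
Fixpoint run (T : dtree n) (x : {ffun 'I_n -> bool}) (S : {set 'I_n})
  : option R :=
  if determined S x then Some 0 else
  match T with
  | Stop => None
  | Test j t0 t1 =>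
      if j \in S then None
      else omap (fun r => c j + r) (run (if x j then t1 else t0) x (j |: S))
  end.

Definition valid_tree (T : dtree n) : Prop :=
  forall x : {ffun 'I_n -> bool}, run T x set0 != None.

Definition exp_cost_tree (T : dtree n) : R :=
  \sum_(x : {ffun 'I_n -> bool}) prob x * odflt 0 (run T x set0).

(* Non-adaptive strategy: a permutation s; test s i is conducted iff the
   tests s 0, ..., s (i-1) do not determine f(x). *)
Definition cost_perm (s : {perm 'I_n}) (x : {ffun 'I_n -> bool}) : R :=
  \sum_(i : 'I_n)
    (if determined [set s j | j in [pred j : 'I_n | (j < i)%N]] x
     then 0 else c (s i)).

Definition exp_cost_perm (s : {perm 'I_n}) : R :=
  \sum_(x : {ffun 'I_n -> bool}) prob x * cost_perm s x.

End SSC.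

From mathcomp Require Import all_boot all_order all_algebra.
From mathcomp Require Import fingroup perm.
From mathcomp Require Import reals.
From mathcomp Require Import ring lra zify.
Set Implicit Arguments. Unset Strict Implicit. Unset Printing Implicit Defensive.
Import Order.TTheory GRing.Theory Num.Theory.
Local Open Scope ring_scope.

(* Take n = 2m+1 tests and k = m+1: test 0 is a fair coin, the m "high"
   tests succeed with probability 1 - d and the m "low" ones with probability
   d.  Adaptively, test 0 first and then the m tests that most likely agree
   with it; with probability (1-d)^(2m) every other test takes its likely value and
   m+1 tests suffice, so OPT <= 2m+1 - m (1-d)^(2m).  A fixed order must serve
   both typical outcomes x1 (test 0 and the high tests are 1) and x0 (only the
   high tests are 1).  Certifying the score of x1 requires all of ones1 =
   {0} u high, and that of x0 all of zeros0 = {0} u low, both of size m+1: no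
   prefix of length <= m does either, and every later test lies in ones1 or
   zeros0, so it is still undetermined for one of them.  Hence x1 and x0 cost
   at least 3m+2 together, each with probability (1-d)^(2m)/2, and the ratio
   tends to 3/2 as d -> 0 and m -> oo. *)

Lemma determined_setT n ts (x : {ffun 'I_n -> bool}) : determined ts setT x.
Proof.
apply/forall_inP => y /forall_inP yx.
by rewrite (_ : y = x) //; apply/ffunP => j; apply/eqP/yx.
Qed.

Section KOfN.
Variables (n k : nat).
Implicit Types (S A : {set 'I_n}) (x : {ffun 'I_n -> bool}).

Lemma score_k_of_n x : score [:: k] x = (1 + (k <= #|[set j | x j]|))%N.
Proof. by rewrite /score /= addn0. Qed.

Lemma determined_ones S A x : A \subset S -> {in A, forall j, x j} ->
  (k <= #|A|)%N -> determined [:: k] S x.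
Proof.
move=> AS Ax kA; apply/forall_inP => y /forall_inP yS; rewrite !score_k_of_n.
have onesA (z : {ffun 'I_n -> bool}) : {in A, forall j, z j} -> (k <= #|[set j | z j]|)%N.
  move=> zA; apply: leq_trans kA (subset_leq_card _).
  by apply/subsetP => j jA; rewrite inE zA.
by rewrite !onesA // => j jA; rewrite (eqP (yS j (subsetP AS j jA))) Ax.
Qed.

Lemma determined_zeros S A x : A \subset S -> {in A, forall j, ~~ x j} ->
  (n < #|A| + k)%N -> determined [:: k] S x.
Proof.
move=> AS Ax kA; apply/forall_inP => y /forall_inP yS; rewrite !score_k_of_n.
have zerosA (z : {ffun 'I_n -> bool}) : {in A, forall j, ~~ z j} ->
    (k <= #|[set j | z j]|)%N = false.
  move=> zA; have /subset_leq_card le : [set j | z j] \subset ~: A.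
    by apply/subsetP => j; rewrite !inE; apply: contraL; apply: zA.
  have cardA : (#|~: A| < k)%N by rewrite -(ltn_add2l #|A|) cardsC card_ord.
  by apply/negbTE; rewrite -ltnNge (leq_ltn_trans le cardA).
by rewrite !zerosA // => j jA; rewrite (eqP (yS j (subsetP AS j jA))) Ax.
Qed.

Lemma undetermined_ones S x : (k <= #|[set j | x j]|)%N ->
  (#|[set j | x j] :&: S| < k)%N -> ~~ determined [:: k] S x.
Proof.
move=> xk xSk; apply/forall_inPn; exists [ffun j => (j \in S) && x j].
  by apply/forall_inP => j jS; rewrite ffunE jS.
rewrite !score_k_of_n.
have -> : [set j | [ffun j => (j \in S) && x j] j] = [set j | x j] :&: S.
  by apply/setP => j; rewrite !inE ffunE andbC.
by rewrite xk leqNgt xSk.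
Qed.

Lemma undetermined_zeros S x : (#|[set j | x j]| < k)%N ->
  (k <= #|[set j | x j] :|: ~: S|)%N -> ~~ determined [:: k] S x.
Proof.
move=> xk xSk; apply/forall_inPn; exists [ffun j => (j \notin S) || x j].
  by apply/forall_inP => j jS; rewrite ffunE jS.
rewrite !score_k_of_n.
have -> : [set j | [ffun j => (j \notin S) || x j] j] = [set j | x j] :|: ~: S.
  by apply/setP => j; rewrite !inE ffunE orbC.
by rewrite xSk leqNgt xk.
Qed.

Fixpoint seq_tree (l : seq 'I_n) : dtree n :=
  if l is j :: l' then Test j (seq_tree l') (seq_tree l') else Stop n.

Lemma run_seq_tree (R : realType) (l : seq 'I_n) S x t :
  uniq l -> {in l, forall j, j \notin S} ->
  determined [:: k] (S :|: [set j in take t l]) x ->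
  exists2 r : R, run (fun _ => 1) [:: k] (seq_tree l) x S = Some r & r <= t%:R.
Proof.
have setU_nil T : T :|: [set j in [::]] = T by apply/setP => i; rewrite !inE orbF.
elim: l S t => [|j l IH] S t /=.
  by move=> _ _; rewrite setU_nil => ->; exists 0.
move=> /andP[jl ul] lS; case: ifP => [_|nd]; first by exists 0.
case: t => [|t]; first by rewrite /= setU_nil nd.
rewrite /= (negbTE (lS j (mem_head _ _))) if_same => det.
have lS' : {in l, forall i, i \notin j |: S}.
  move=> i il; rewrite !inE negb_or lS ?inE ?il ?orbT // andbT.
  by apply: contraNneq jl => <-.
have det' : determined [:: k] (j |: S :|: [set i in take t l]) x.
  rewrite (_ : _ :|: _ = S :|: [set i in j :: take t l]) //.
  by apply/setP => i; rewrite !inE orbCA orbA.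
have [r -> le_rt] := IH (j |: S) t ul lS' det'.
by exists (1 + r); rewrite // -addn1 natrD addrC lerD2r.
Qed.

End KOfN.

Lemma run_ge0 (R : realType) n (c : 'I_n -> R) ts (T : dtree n) x S r :
  (forall j, 0 <= c j) -> run c ts T x S = Some r -> 0 <= r.
Proof.
move=> c_ge0; elim: T S r => [|j t0 IH0 t1 IH1] S r /=; case: ifP => [_ [<-] //|_] //.
case: ifP => // _; case e: (run _ _ _ _ _) => [r'|] //= [<-].
by apply: addr_ge0 => //; case: (x j) e => e; [exact: IH1 e | exact: IH0 e].
Qed.

Lemma cost_perm_unit (R : realType) n ts (s : {perm 'I_n}) x :
  cost_perm (fun _ => 1 : R) ts s x =
  (\sum_(i < n) ~~ determined ts [set s j | j in [pred j : 'I_n | (j < i)%N]] x)%:R.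
Proof. by rewrite /cost_perm natr_sum; apply: eq_bigr => i _; case: ifP. Qed.

Section ProductDistribution.
Variables (R : realType) (n : nat) (p : 'I_n -> R).

Lemma sum_prob_prod (h : 'I_n -> bool -> R) :
  \sum_(x : {ffun 'I_n -> bool}) prob p x * \prod_j h j (x j) =
  \prod_j (p j * h j true + (1 - p j) * h j false).
Proof.
pose F j (b : bool) := (if b then p j else 1 - p j) * h j b.
rewrite (eq_bigr (fun x : {ffun 'I_n -> bool} => \prod_j F j (x j))) => [|x _].
  by rewrite -bigA_distr_bigA; apply: eq_bigr => j _; rewrite big_bool /F addrC.
by rewrite big_split.
Qed.

Lemma sum_prob : \sum_(x : {ffun 'I_n -> bool}) prob p x = 1.
Proof.
have := sum_prob_prod (fun _ _ => 1); rewrite [RHS]big1 => [e|j _]; last first.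
  by rewrite !mulr1 subrKC.
by rewrite -[RHS]e; apply: eq_bigr => x _; rewrite big1 ?mulr1.
Qed.

Hypothesis p01 : forall j, 0 <= p j <= 1.

Lemma prob_ge0 x : 0 <= prob p x.
Proof. by apply: prodr_ge0 => j _; have := p01 j; case: (x j); lra. Qed.

Lemma exp_cost_tree_ge0 (c : 'I_n -> R) ts (T : dtree n) :
  (forall j, 0 <= c j) -> 0 <= exp_cost_tree c p ts T.
Proof.
move=> c_ge0; apply: sumr_ge0 => x _; rewrite mulr_ge0 ?prob_ge0 //.
by case e: run => [r|] //=; exact: run_ge0 e.
Qed.


End ProductDistribution.

Lemma prodr_ord0_const (R : comPzRingType) n (a b : R) :
  \prod_(j < n.+1) (if j == ord0 then a else b) = a * b ^+ n.
Proof.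
rewrite (bigD1 ord0) //= (eq_bigr (fun _ => b)) => [|j /negbTE -> //].
by rewrite prodr_const cardC1 card_ord.
Qed.

Lemma bernoulli_ineq (R : realDomainType) (d : R) K :
  0 <= d <= 1 -> 1 - K%:R * d <= (1 - d) ^+ K.
Proof.
move=> /andP[d0 d1]; elim: K => [|K IH]; first by rewrite expr0 mul0r subr0.
have h : 0 <= (1 - d) * ((1 - d) ^+ K - (1 - K%:R * d)).
  by apply: mulr_ge0; lra.
have hK : 0 <= K%:R * d * d by rewrite mulr_ge0 ?mulr_ge0.
by rewrite exprS -addn1 natrD; nra.
Qed.

Lemma card_ord_lt n (i : 'I_n) : (#|[pred j : 'I_n | (j < i)%N]| <= i)%N.
Proof.
have widen_inj : injective (widen_ord (ltnW (ltn_ord i))).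
  by move=> u v /(congr1 val) /= /val_inj.
rewrite -{2}(card_ord i) -(card_codom widen_inj); apply: subset_leq_card.
by apply/subsetP => j; rewrite inE => ji; apply/codomP; exists (Ordinal ji); apply: val_inj.
Qed.

Section OrdinalRange.
Variable n : nat.

Definition ord_range (a b : nat) : seq 'I_n.+1 := [seq inord t | t <- iota a b].

Variables a b : nat.
Hypothesis ab_le : (a + b <= n.+1)%N.

Lemma mem_ord_range (j : 'I_n.+1) : (j \in ord_range a b) = (a <= j < a + b)%N.
Proof.
apply/mapP/idP => [[t]|jab]; first by rewrite mem_iota => tab ->; rewrite inordK //; lia.
by exists (nat_of_ord j); rewrite ?mem_iota ?inord_val.
Qed.

Lemma uniq_ord_range : uniq (ord_range a b).
Proof.
rewrite map_inj_in_uniq ?iota_uniq // => s t; rewrite !mem_iota => sab tab.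
by move/(congr1 val); rewrite /= !inordK //; lia.
Qed.

Lemma size_ord_range : size (ord_range a b) = b.
Proof. by rewrite size_map size_iota. Qed.

Lemma card_ord_range : #|[set j in ord_range a b]| = b.
Proof. by rewrite cardsE (card_uniqP uniq_ord_range) size_ord_range. Qed.

End OrdinalRange.

Lemma three_halves_gap (R : realFieldType) (eps M a T : R) :
  0 < M -> 1 < eps * M -> 0 <= a <= 1 -> 2 * (3 * M + 1) * (1 - a) <= 1 ->
  0 <= T <= 2 * M + 1 - M * a -> (3 / 2 - eps) * T <= a / 2 * (3 * M + 2).
Proof.
move=> M_gt0 epsM /andP[a_ge0 a_le1] a_gap /andP[T_ge0 T_le].
have eps_gt0 : 0 < eps by rewrite -(pmulr_lgt0 _ M_gt0); lra.
have RHS_ge0 : 0 <= a / 2 * (3 * M + 2) by rewrite !mulr_ge0 ?invr_ge0; lra.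
have [eps_le|eps_gt] := lerP eps (3 / 2); last first.
  by apply: le_trans RHS_ge0; rewrite mulr_le0_ge0 //; lra.
apply: le_trans (ler_wpM2l _ T_le) _; first lra.
have : 0 <= eps * M * (1 - a) by rewrite !mulr_ge0 //; lra.
lra.
Qed.

Section HardInstance.
Variable m : nat.
Local Notation N := (m + m).+1.
Local Notation k := m.+1.

Definition hi_tests : seq 'I_N := ord_range (m + m) 1 m.
Definition lo_tests : seq 'I_N := ord_range (m + m) m.+1 m.

Let hi_le : (1 + m <= N)%N. Proof. lia. Qed.
Let lo_le : (m.+1 + m <= N)%N. Proof. lia. Qed.

Lemma neq_ord0 (j : 'I_N) : (j != ord0) = (0 < j)%N.
Proof. by rewrite lt0n -(inj_eq val_inj). Qed.

Lemma mem_hi (j : 'I_N) : (j \in hi_tests) = (0 < j <= m)%N.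
Proof. by rewrite (mem_ord_range hi_le); apply/idP/idP; lia. Qed.

Lemma mem_lo (j : 'I_N) : (j \in lo_tests) = (m < j)%N.
Proof. by have := ltn_ord j; rewrite (mem_ord_range lo_le) => jN; apply/idP/idP; lia. Qed.

Lemma uniq_tests : uniq (hi_tests ++ lo_tests).
Proof.
rewrite cat_uniq (uniq_ord_range hi_le) (uniq_ord_range lo_le) andbT /=.
by apply/hasPn => j; rewrite mem_lo mem_hi; lia.
Qed.

Lemma mem_tests (j : 'I_N) : (j \in hi_tests ++ lo_tests) = (j != ord0).
Proof. by rewrite mem_cat mem_hi mem_lo neq_ord0; apply/idP/idP; lia. Qed.

Lemma size_tests : size (hi_tests ++ lo_tests) = (m + m)%N.
Proof. by rewrite size_cat !size_ord_range. Qed.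

Definition ones1 : {set 'I_N} := ord0 |: [set j in hi_tests].
Definition zeros0 : {set 'I_N} := ord0 |: [set j in lo_tests].

Lemma card_ones1 : #|ones1| = k.
Proof. by rewrite cardsU1 (card_ord_range hi_le) inE mem_hi. Qed.

Lemma card_zeros0 : #|zeros0| = k.
Proof. by rewrite cardsU1 (card_ord_range lo_le) inE mem_lo. Qed.

Lemma ones1_or_zeros0 j : (j \in ones1) || (j \in zeros0).
Proof. by rewrite !inE mem_hi mem_lo -neq_ord0; case: eqP => //= _; lia. Qed.

Definition x1 : {ffun 'I_N -> bool} := [ffun j => j \in ones1].
Definition x0 : {ffun 'I_N -> bool} := [ffun j => j \in hi_tests].

Lemma ones_x1 : [set j | x1 j] = ones1.
Proof. by apply/setP => j; rewrite inE ffunE. Qed.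

Lemma ones_x0 : [set j | x0 j] = [set j in hi_tests].
Proof. by apply/setP => j; rewrite !inE ffunE. Qed.

Lemma undetermined_x1 (P : {set 'I_N}) : ~~ (ones1 \subset P) -> ~~ determined [:: k] P x1.
Proof.
move=> ones1P; apply: undetermined_ones; rewrite ones_x1 ?card_ones1 //.
rewrite -[X in (_ < X)%N]card_ones1; apply: proper_card; rewrite properEneq subsetIl andbT.
by apply: contraNneq ones1P => <-; rewrite subsetIr.
Qed.

Lemma undetermined_x0 (P : {set 'I_N}) : ~~ (zeros0 \subset P) -> ~~ determined [:: k] P x0.
Proof.
case/subsetPn => b b_zero bP; apply: undetermined_zeros.
  by rewrite ones_x0 (card_ord_range hi_le).
have b_hi : b \notin [set j in hi_tests].
  by move: b_zero; rewrite !inE mem_hi mem_lo; case: eqP => [->|_] //=; lia.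
apply: leq_trans (subset_leq_card (_ : b |: [set j | x0 j] \subset _)).
  by rewrite cardsU1 ones_x0 b_hi (card_ord_range hi_le).
by apply/subsetP => j; rewrite !inE; case/orP => [/eqP ->|->]; rewrite ?bP ?orbT.
Qed.

Local Notation prefix s i := [set s j | j in [pred j : 'I_N | (j < i)%N]].

Lemma undetermined_prefix (s : {perm 'I_N}) (i : 'I_N) :
  ((i <= m) + 1 <=
   ~~ determined [:: k] (prefix s i) x1 + ~~ determined [:: k] (prefix s i) x0)%N.
Proof.
have card_prefix : (#|prefix s i| <= i)%N := leq_trans (leq_imset_card _ _) (card_ord_lt i).
have [i_le|i_gt] := leqP i m.
  rewrite !(negbTE (undetermined_x1 _)) ?(negbTE (undetermined_x0 _)) //.
    by apply/negP => /subset_leq_card; rewrite card_zeros0; lia.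
  by apply/negP => /subset_leq_card; rewrite card_ones1; lia.
have si_fresh : s i \notin prefix s i.
  by apply/imsetP => -[j]; rewrite inE => ji /perm_inj eji; rewrite eji ltnn in ji.
have /orP[si1|si0] := ones1_or_zeros0 (s i).
  by rewrite undetermined_x1 //; apply/subsetPn; exists (s i).
by rewrite undetermined_x0 ?addn1 //; apply/subsetPn; exists (s i).
Qed.

Lemma undetermined_prefixes (s : {perm 'I_N}) :
  (3 * m + 2 <= \sum_(i < N) (~~ determined [:: k] (prefix s i) x1 +
                              ~~ determined [:: k] (prefix s i) x0))%N.
Proof.
apply: leq_trans (leq_sum _ (fun i _ => undetermined_prefix s i)).
rewrite big_split /= sum1_card card_ord -big_mkcond /= sum1_card.
have -> : #|[pred i : 'I_N | (i <= m)%N]| = #|ones1|.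
  by apply: eq_card => j; rewrite !inE mem_hi -[j == _]negbK neq_ord0; case: (nat_of_ord j).
rewrite card_ones1; lia.
Qed.

Definition adaptive_tree : dtree N :=
  Test ord0 (seq_tree (lo_tests ++ hi_tests)) (seq_tree (hi_tests ++ lo_tests)).

Definition typical (x : {ffun 'I_N -> bool}) :=
  [forall j : 'I_N, (j != ord0) ==> (x j == (j \in hi_tests))].

Variable R : realType.

Lemma run_rest_tree (l : seq 'I_N) x : perm_eq l (hi_tests ++ lo_tests) ->
  exists2 r : R, run (fun _ => 1) [:: k] (seq_tree l) x [set ord0] = Some r &
    r <= (m + m)%:R /\ (determined [:: k] (ord0 |: [set j in take m l]) x -> r <= m%:R).
Proof.
move=> l_tests; have ul : uniq l by rewrite (perm_uniq l_tests) uniq_tests.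
have l_nz : {in l, forall j, j \notin [set ord0]}.
  by move=> j; rewrite (perm_mem l_tests) mem_tests inE.
have l_all : ord0 |: [set j in take (size l) l] = setT.
  by apply/setP => j; rewrite take_size !inE (perm_mem l_tests) mem_tests orbN.
have /(run_seq_tree R ul l_nz) [r run_l r_le] :
  determined [:: k] (ord0 |: [set j in take (size l) l]) x by rewrite l_all determined_setT.
exists r => //; split; first by rewrite -size_tests -(perm_size l_tests).
by move=> /(run_seq_tree R ul l_nz) [r']; rewrite run_l => -[<-].
Qed.

Lemma run_adaptive_tree x :
  exists2 r : R, run (fun _ => 1) [:: k] adaptive_tree x set0 = Some r &
    r <= (if typical x then k else N)%:R.
Proof.
rewrite /= in_set0 setU0; case: ifP => [_|_]; first by exists 0; rewrite // ler0n.
have typ_hi j : typical x -> j \in hi_tests -> x j.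
  move=> /forallP /(_ j) /implyP typ j_hi; rewrite (eqP (typ _)) //.
  by move: j_hi; rewrite mem_hi neq_ord0 => /andP[].
have typ_lo j : typical x -> j \in lo_tests -> ~~ x j.
  move=> /forallP /(_ j) /implyP typ; rewrite mem_lo => j_lo.
  have j_nz : j != ord0 by rewrite neq_ord0; lia.
  by rewrite (eqP (typ j_nz)) mem_hi; lia.
have one_plus (r : R) (t : nat) : r <= t%:R -> 1 + r <= t.+1%:R.
  by rewrite -addn1 natrD addrC lerD2r.
case x_ord0: (x ord0).
  have [r -> [r_le det_le]] := run_rest_tree x (perm_refl (hi_tests ++ lo_tests)).
  exists (1 + r) => //; case: ifP => [typ|_]; apply: one_plus => //.
  apply: det_le; rewrite take_size_cat ?size_ord_range //.
  apply: (determined_ones (A := ones1)) => //; last by rewrite card_ones1.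
  by move=> j; rewrite !inE => /orP[/eqP ->|/typ_hi ->].
have lo_hi : perm_eq (lo_tests ++ hi_tests) (hi_tests ++ lo_tests) by rewrite perm_catC.
have [r -> [r_le det_le]] := run_rest_tree x lo_hi.
exists (1 + r) => //; case: ifP => [typ|_]; apply: one_plus => //.
apply: det_le; rewrite take_size_cat ?size_ord_range //.
apply: (determined_zeros (A := zeros0)) => //; last by rewrite card_zeros0; lia.
by move=> j; rewrite !inE => /orP[/eqP ->|/typ_lo ->]; rewrite ?x_ord0.
Qed.

Variable d : R.
Hypotheses (d_gt0 : 0 < d) (d_lt1 : d < 1).

Definition hard_p (j : 'I_N) : R :=
  if j == ord0 then 1 / 2 else if j \in hi_tests then 1 - d else d.

Lemma hard_p01 j : 0 < hard_p j < 1.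
Proof.
(* lra does not look at section hypotheses, hence the explicit [move:]. *)
move: d_gt0 d_lt1; rewrite /hard_p => d0 d1.
by case: ifP => _; [|case: ifP => _]; apply/andP; split; lra.
Qed.

Let hard_p_range j : 0 <= hard_p j <= 1.
Proof. by have /andP[/ltW -> /ltW ->] := hard_p01 j. Qed.

Lemma sum_prob_typical :
  \sum_(x : {ffun 'I_N -> bool}) prob hard_p x * (typical x)%:R = (1 - d) ^+ (m + m).
Proof.
pose h j (b : bool) : R := if j == ord0 then 1 else (b == (j \in hi_tests))%:R.
have prod_h (x : {ffun 'I_N -> bool}) : \prod_j h j (x j) = (typical x)%:R.
  case: (boolP (typical x)) => [/forallP typ | /forallPn [j]].
    by apply: big1 => j _; rewrite /h; case: eqP => // /eqP /(implyP (typ j)) ->.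
  rewrite negb_imply => /andP[j_nz x_j]; rewrite (bigD1 j) //= /h (negbTE j_nz).
  by rewrite (negbTE x_j) mul0r.
under eq_bigr => x _ do rewrite -prod_h.
rewrite sum_prob_prod -[RHS]mul1r -prodr_ord0_const; apply: eq_bigr => j _.
by rewrite /h /hard_p; case: eqP => _; [|case: (j \in hi_tests)] => /=; lra.
Qed.

Lemma prob_typical x : typical x -> prob hard_p x = 1 / 2 * (1 - d) ^+ (m + m).
Proof.
move=> /forallP typ; rewrite -prodr_ord0_const; apply: eq_bigr => j _.
rewrite /hard_p; case: eqP => [_|/eqP j_nz]; first by case: (x j); lra.
by rewrite (eqP (implyP (typ j) j_nz)); case: (j \in hi_tests).
Qed.

Lemma typical_x1 : typical x1.
Proof.
apply/forallP => j; apply/implyP => j_nz; rewrite ffunE !inE (negbTE j_nz).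
by rewrite !mem_hi; move: j_nz; rewrite neq_ord0 => ->.
Qed.

Lemma typical_x0 : typical x0.
Proof. by apply/forallP => j; rewrite ffunE eqxx implybT. Qed.

Lemma exp_cost_adaptive_tree :
  exp_cost_tree (fun _ => 1) hard_p [:: k] adaptive_tree <= N%:R - m%:R * (1 - d) ^+ (m + m).
Proof.
rewrite -sum_prob_typical -[N%:R]mulr1 -[X in N%:R * X](sum_prob hard_p) !mulr_sumr -sumrB.
apply: ler_sum => x _.
rewrite (_ : _ - _ = prob hard_p x * (N%:R - m%:R * (typical x)%:R)); last by ring.
apply: ler_wpM2l; first exact: prob_ge0.
have [r -> /= r_le] := run_adaptive_tree x.
case: (typical x) r_le; rewrite ?mulr1 ?mulr0 ?subr0 // -natrB; last lia.
by rewrite (_ : (N - m)%N = k) //; lia.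
Qed.

Lemma exp_cost_perm_hard (s : {perm 'I_N}) :
  (1 - d) ^+ (m + m) / 2 * (3 * m + 2)%:R <= exp_cost_perm (fun _ => 1) hard_p [:: k] s.
Proof.
have x0_x1 : x0 != x1 by apply/eqP => /ffunP /(_ ord0); rewrite !ffunE !inE eqxx mem_hi.
rewrite /exp_cost_perm (bigD1 x1) //= (bigD1 x0) //= addrA.
rewrite -[X in X <= _]addr0 lerD //; last first.
  by apply: sumr_ge0 => x _; rewrite mulr_ge0 ?prob_ge0 // cost_perm_unit ler0n.
rewrite !prob_typical ?typical_x0 ?typical_x1 // -mulrDr !cost_perm_unit -natrD -big_split /=.
rewrite mul1r [2^-1 * _]mulrC ler_wpM2l ?ler_nat ?undetermined_prefixes //.
by rewrite mulr_ge0 ?invr_ge0 ?exprn_ge0 ?subr_ge0 ?ltW.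
Qed.

Lemma three_halves_gap_hard eps (s : {perm 'I_N}) :
  1 < eps * m%:R -> 4 * m%:R * (3 * m%:R + 1) * d <= 1 ->
  (3 / 2 - eps) * exp_cost_tree (fun _ => 1) hard_p [:: k] adaptive_tree <=
  exp_cost_perm (fun _ => 1) hard_p [:: k] s.
Proof.
move=> epsM d_small; apply: le_trans (exp_cost_perm_hard s).
move: d_gt0 d_lt1 => d0 d1.
have m_gt0 : (0 < m)%N by rewrite lt0n; apply: contraTneq epsM => ->; rewrite mulr0 ltr10.
have a_ge : 1 - 2 * m%:R * d <= (1 - d) ^+ (m + m).
  rewrite (_ : 2 * m%:R = (m + m)%:R); last by rewrite natrD; lra.
  by rewrite bernoulli_ineq // !ltW.
have a_le1 : (1 - d) ^+ (m + m) <= 1 by rewrite exprn_ile1 //; lra.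
rewrite natrD natrM.
apply: three_halves_gap; rewrite ?ltr0n //.
- by rewrite exprn_ge0 ?a_le1 // subr_ge0 ltW.
- have : 0 <= 2 * (3 * m%:R + 1) * ((1 - d) ^+ (m + m) - (1 - 2 * m%:R * d)).
    by have := ler0n R m => ?; apply: mulr_ge0; lra.
  nra.
- have NE : N%:R = 2 * m%:R + 1 :> R by rewrite -addn1 !natrD; lra.
  by rewrite exp_cost_tree_ge0 //=; have := exp_cost_adaptive_tree; rewrite NE; lra.
Qed.

End HardInstance.

Theorem theorem3 (R : realType) (eps : R) :
  0 < eps ->
  exists (n k : nat) (p : 'I_n -> R),
    [/\ (0 < k <= n)%N,
        (forall j, 0 < p j < 1) &
        exists T : dtree n,
          valid_tree (fun _ => 1 : R) [:: k] T /\
          forall s : {perm 'I_n},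
            exp_cost_perm (fun _ => 1 : R) p [:: k] s >=
            (3 / 2 - eps) * exp_cost_tree (fun _ => 1 : R) p [:: k] T].
Proof.
move=> eps_gt0.
pose m := Num.Def.archi_bound eps^-1; pose M : R := m%:R.
have epsM : 1 < eps * M.
  have /archi_boundP bound : 0 <= eps^-1 by rewrite invr_ge0 ltW.
  by rewrite -(ltr_pM2l eps_gt0) mulfV ?gt_eqF in bound.
have M_ge1 : 1 <= M by rewrite ler1n -(ltr0n R) -(pmulr_rgt0 _ eps_gt0); lra.
pose d : R := (4 * M * (3 * M + 1))^-1.
have d_gt0 : 0 < d by rewrite invr_gt0 !mulr_gt0 //; lra.
have d_lt1 : d < 1 by rewrite invf_lt1 ?mulr_gt0 //; nra.
exists (m + m).+1, m.+1, (@hard_p m R d); split; first lia.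
  by move=> j; exact: hard_p01.
exists (adaptive_tree m); split.
  by move=> x; have [r -> _] := run_adaptive_tree R x.
move=> s; apply: three_halves_gap_hard => //.
by rewrite /d mulfV // gt_eqF //; nra.
Qed.
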